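(* In the curved-exam game described in the context, each payoff $U_i(x_i,x_{-i})$ is non-increasing in every opponent's effort $x_j$, $j\ne i$ (negative spillovers). Moreover, the game has at least one pure-strategy Nash equilibrium, and there exist pure Nash equilibria $x^*$ and $y^*$ such that every pure Nash equilibrium $x^e$ satisfies $x^*_i\le x^e_i\le y^*_i$ for all $i=1,\dots,n$.
   Context: The curved-exam game $\Gamma_n$: fix an integer $n\ge 2$, ability parameters $\alpha_1,\dots,\alpha_n\in(0,1)$ and a target mean $m\in(0,1)$. Each student $i\in\{1,\dots,n\}$ chooses $x_i\in[0,1]$; $\bar x=\frac1n\sum_j x_j$, $\bar x_{-i}=\frac1{n-1}\sum_{j\ne i}x_j$. Grade $G_i(x)=x_i+\max(m-\bar x,0)=\max\big(m+\frac{n-1}{n}(x_i-\bar x_{-i}),x_i\big)$ (not truncated at 1); payoff $U_i(x)=G_i(x)^{\alpha_i}(1-x_i)^{1-\alpha_i}$. A pure Nash equilibrium is a profile $x\in[0,1]^n$ such that for every $i$, $U_i(x)\ge U_i(x_i',x_{-i})$ for all $x_i'\in[0,1]$. *)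

From HB Require Import structures.
From mathcomp Require Import all_boot all_order all_algebra.
From mathcomp Require Import reals exp.
Set Implicit Arguments. Unset Strict Implicit. Unset Printing Implicit Defensive.
Import Order.TTheory GRing.Theory Num.Theory.
Local Open Scope ring_scope.

Section CurvedExam.
Variables (R : realType) (n : nat).

Definition profile := 'I_n -> R.

Definition in01 (x : profile) : Prop := forall j, 0 <= x j <= 1.

Definition xbar (x : profile) : R := (\sum_(j < n) x j) / n%:R.

(* grade G_i(x) = x_i + max(m - xbar, 0)  (not truncated at 1) *)
Definition grade (m : R) (x : profile) (i : 'I_n) : R :=
  x i + Num.max (m - xbar x) 0.

Definition payoff (alpha : 'I_n -> R) (m : R) (x : profile) (i : 'I_n) : R :=
  powR (grade m x i) (alpha i) * powR (1 - x i) (1 - alpha i).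

Definition deviate (x : profile) (i : 'I_n) (y : R) : profile :=
  fun j => if j == i then y else x j.

Definition is_NE (alpha : 'I_n -> R) (m : R) (x : profile) : Prop :=
  in01 x /\
  forall (i : 'I_n) (y : R), 0 <= y <= 1 ->
    payoff alpha m (deviate x i y) i <= payoff alpha m x i.

End CurvedExam.

From HB Require Import structures.
From mathcomp Require Import all_boot all_order all_algebra.
From mathcomp Require Import reals exp.
From mathcomp Require Import classical_sets.
From mathcomp Require Import ring lra.
Set Implicit Arguments. Unset Strict Implicit. Unset Printing Implicit Defensive.
Import Order.TTheory GRing.Theory Num.Theory.
Local Open Scope ring_scope.

(* Fix the efforts of the others.  With k = 1 - 1/n and c the headroom that the
   others leave below the target mean, student i's grade at effort t is
   max (t, c + k t), so the payoff is the upper envelope of the two strictly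
   log-concave functions t^a (1 - t)^(1 - a) and (c + k t)^a (1 - t)^(1 - a).
   Each has an explicit peak, so the largest and the smallest best replies are
   explicit, and both are nonincreasing in c.  Since c decreases when the
   others work more, the largest and the smallest best-reply maps are monotone
   on [0, 1]^n, and by Tarski's theorem they have a greatest and a least fixed
   point.  Both are Nash equilibria, and every equilibrium lies between the
   least and the largest best replies to itself, hence between these two fixed
   points.  Negative spillovers are the monotonicity of the payoff in c. *)

Local Notation "a `^ x" := (powR a x).

Lemma ln_lt_subr1 (R : realType) (z : R) : 0 < z -> z != 1 -> ln z < z - 1.
Proof.
move=> z0 z1; have lnz0 : ln z != 0 by rewrite ln_eq0.
by have := expR_gt1Dx lnz0; rewrite lnK ?posrE // -ltrBrDl.
Qed.

Lemma ln_le_subr1 (R : realType) (z : R) : 0 < z -> ln z <= z - 1.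
Proof.
move=> z0; case: (eqVneq z 1) => [->|z1]; first by rewrite ln1 subrr.
exact/ltW/ln_lt_subr1.
Qed.

Section CobbDouglas.
Variables (R : realType) (a : R).
Hypothesis a01 : 0 < a < 1.

Definition cobb_douglas (u v : R) := u `^ a * v `^ (1 - a).

Lemma cobb_douglas_gt0 u v : 0 < u -> 0 < v -> 0 < cobb_douglas u v.
Proof. by move=> u0 v0; rewrite mulr_gt0 ?powR_gt0. Qed.

Lemma cobb_douglas_homol u u' v :
  0 <= u -> u <= u' -> cobb_douglas u v <= cobb_douglas u' v.
Proof.
move=> u0 uu'; case/andP: a01 => a0 _.
rewrite ler_wpM2r ?powR_ge0 // ge0_ler_powR ?nnegrE ?(ltW a0) //.
exact: le_trans uu'.
Qed.

Lemma ln_cobb_douglas u v : 0 < u -> 0 < v ->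
  ln (cobb_douglas u v) = a * ln u + (1 - a) * ln v.
Proof. by move=> u0 v0; rewrite lnM ?posrE ?powR_gt0 // !ln_powR. Qed.

(* Tangent-line bound for the concave map t |-> a ln (p + q t) + (1 - a) ln (1 - t):
   the second factor of the slope hypothesis is (p + q s) (1 - s) times its
   derivative at s. *)
Lemma cobb_douglas_affine_lt p q s t :
  0 < p + q * s -> s < 1 -> 0 <= p + q * t -> t <= 1 -> t != s ->
  (t - s) * (a * q * (1 - s) - (1 - a) * (p + q * s)) <= 0 ->
  cobb_douglas (p + q * t) (1 - t) < cobb_douglas (p + q * s) (1 - s).
Proof.
case/andP: a01 => a0 a1 P0 s1 u0 t1 ts slope_s.
have Q0 : 0 < 1 - s by rewrite subr_gt0.
have CD0 := cobb_douglas_gt0 P0 Q0.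
case: (eqVneq (p + q * t) 0) => [->|u0'].
  by rewrite /cobb_douglas powR0 ?gt_eqF // mul0r.
case: (eqVneq t 1) => [->|t1'].
  by rewrite /cobb_douglas subrr powR0 ?mulr0 // gt_eqF ?subr_gt0.
have {u0'}u0 : 0 < p + q * t by rewrite lt_neqAle eq_sym u0' u0.
have v0 : 0 < 1 - t by rewrite subr_gt0 lt_neqAle t1' t1.
rewrite -ltr_ln ?posrE ?cobb_douglas_gt0 // !ln_cobb_douglas //.
have lnX : ln (p + q * t) - ln (p + q * s) <= (p + q * t) / (p + q * s) - 1.
  by rewrite -ln_div ?posrE // ln_le_subr1 // divr_gt0.
have lnY : ln (1 - t) - ln (1 - s) < (1 - t) / (1 - s) - 1.
  rewrite -ln_div ?posrE // ln_lt_subr1 ?divr_gt0 //.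
  by apply: contra_neq ts => /divr1_eq; lra.
have slope : a * ((p + q * t) / (p + q * s) - 1) + (1 - a) * ((1 - t) / (1 - s) - 1)
    = (t - s) * (a * q * (1 - s) - (1 - a) * (p + q * s)) / ((p + q * s) * (1 - s)).
  by field; rewrite !gt_eqF.
have slope_le0 : (t - s) * (a * q * (1 - s) - (1 - a) * (p + q * s))
    / ((p + q * s) * (1 - s)) <= 0 by rewrite ler_pdivrMr ?mulr_gt0 // mul0r.
have a1' : 0 < 1 - a by rewrite subr_gt0.
move: lnY; rewrite -(ltr_pM2l a1'); have := ler_wpM2l (ltW a0) lnX; lra.
Qed.
End CobbDouglas.

Section BestResponse.
Variables (R : realType) (k a : R).
Hypotheses (k01 : 0 < k < 1) (a01 : 0 < a < 1).

(* The payoff of a student of ability [a] and effort [t] when the others leave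
   headroom [c] (see [payoffE]). *)
Definition utility (c t : R) := cobb_douglas a (Num.max t (c + k * t)) (1 - t).

Definition is_best_response (c t : R) :=
  0 <= t <= 1 /\ forall t', 0 <= t' <= 1 -> utility c t' <= utility c t.

(* Root of the first-order condition a k (1 - t) = (1 - a) (c + k t) for the
   peak of (c + k t)^a (1 - t)^(1 - a), clipped at 0. *)
Definition curved_effort (c : R) := Num.max 0 (a - (1 - a) * c / k).

Definition uncurved_value := cobb_douglas a a (1 - a).

Definition curved_value (c : R) :=
  cobb_douglas a (c + k * curved_effort c) (1 - curved_effort c).

Lemma utility_cases c t : 0 <= t ->
  utility c t = cobb_douglas a t (1 - t) \/
  0 < c /\ utility c t = cobb_douglas a (c + k * t) (1 - t).
Proof.
move=> t0; case: (leP (c + k * t) t) => [le_ct|lt_tc].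
  by left; rewrite /utility max_l.
right; split; last by rewrite /utility max_r // ltW.
case/andP: k01 => _ k1; nra.
Qed.

Lemma utility_ge_uncurved c t : 0 <= t -> cobb_douglas a t (1 - t) <= utility c t.
Proof. by move=> t0; rewrite cobb_douglas_homol // le_max lexx. Qed.

Lemma utility_ge_curved c t : 0 <= c + k * t ->
  cobb_douglas a (c + k * t) (1 - t) <= utility c t.
Proof. by move=> ct0; rewrite cobb_douglas_homol // le_max lexx orbT. Qed.

Lemma utility_homo c c' t : 0 <= t -> c <= c' -> utility c t <= utility c' t.
Proof.
move=> t0 cc'; apply: (cobb_douglas_homol a01).
  by rewrite le_max t0.
by apply: le_max2; rewrite // lerD2r.
Qed.

Lemma uncurved_lt t : 0 <= t <= 1 -> t != a ->
  cobb_douglas a t (1 - t) < uncurved_value.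
Proof.
case/andP: a01 => a0 a1 /andP[t0 t1] ta.
have := @cobb_douglas_affine_lt _ _ a01 0 1 a t; rewrite !add0r !mul1r; apply => //.
by rewrite mulr1 [(1 - a) * a]mulrC subrr mulr0.
Qed.

Lemma uncurved_le t : 0 <= t <= 1 -> cobb_douglas a t (1 - t) <= uncurved_value.
Proof.
move=> t01; case: (eqVneq t a) => [->|ta]; first exact: lexx.
exact/ltW/uncurved_lt.
Qed.

Lemma curved_effort_ge0 c : 0 <= curved_effort c.
Proof. by rewrite le_max lexx. Qed.

Lemma curved_effort_le c : 0 <= c -> curved_effort c <= a.
Proof.
case/andP: a01 => a0 a1; case/andP: k01 => k0 _ c0.
rewrite ge_max (ltW a0) gerBl divr_ge0 ?(ltW k0) // mulr_ge0 // subr_ge0 ltW //.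
Qed.

Lemma curved_effort_anti c c' : c <= c' -> curved_effort c' <= curved_effort c.
Proof.
case/andP: a01 => _ a1; case/andP: k01 => k0 _ cc'.
by apply: le_max2 => //; rewrite lerB // ler_pM2r ?invr_gt0 // ler_pM2l // subr_gt0.
Qed.

Lemma curved_effort_in01 c : 0 < c -> 0 <= curved_effort c <= 1.
Proof.
move=> c0; case/andP: a01 => _ a1.
by rewrite curved_effort_ge0 (le_trans (curved_effort_le (ltW c0))) // ltW.
Qed.

Lemma curved_lt c t : 0 < c -> 0 <= t <= 1 -> t != curved_effort c ->
  cobb_douglas a (c + k * t) (1 - t) < curved_value c.
Proof.
case/andP: a01 => a0 a1; case/andP: k01 => k0 k1 c0 /andP[t0 t1] ts.
have ea := curved_effort_le (ltW c0).
apply: cobb_douglas_affine_lt => //.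
- by apply: lt_le_trans c0 _; rewrite lerDl mulr_ge0 ?curved_effort_ge0 // ltW.
- exact: le_lt_trans ea a1.
- by rewrite addr_ge0 ?mulr_ge0 // ltW.
rewrite /curved_effort; case: (leP (a - (1 - a) * c / k) 0) => [|_].
  rewrite subr_le0 ler_pdivlMr // => corner.
  by rewrite !subr0 mulr1 mulr0 addr0; apply: mulr_ge0_le0; rewrite // subr_le0.
suff -> : a * k * (1 - (a - (1 - a) * c / k))
          - (1 - a) * (c + k * (a - (1 - a) * c / k)) = 0.
  by rewrite mulr0.
by field; rewrite gt_eqF.
Qed.

Lemma curved_le c t : 0 < c -> 0 <= t <= 1 ->
  cobb_douglas a (c + k * t) (1 - t) <= curved_value c.
Proof.
move=> c0 t01; case: (eqVneq t (curved_effort c)) => [->|ts]; first exact: lexx.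
exact/ltW/curved_lt.
Qed.

Lemma curved_value_homo c c' :
  0 < c -> c <= c' -> curved_value c <= curved_value c'.
Proof.
case/andP: k01 => k0 _ c0 cc'.
apply: le_trans (curved_le (lt_le_trans c0 cc') (curved_effort_in01 c0)).
rewrite cobb_douglas_homol ?lerD2r //.
by rewrite addr_ge0 ?mulr_ge0 ?curved_effort_ge0 // ltW.
Qed.

Lemma utility_le_values c t : 0 <= t <= 1 ->
  utility c t <= uncurved_value \/ 0 < c /\ utility c t <= curved_value c.
Proof.
move=> t01; case/andP: (t01) => t0 _.
case: (utility_cases c t0) => [->|[c0 ->]]; first by left; exact: uncurved_le.
by right; split; last exact: curved_le.
Qed.

Lemma uncurved_value_le_utility c : uncurved_value <= utility c a.
Proof. by case/andP: a01 => a0 _; exact/utility_ge_uncurved/ltW. Qed.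

Lemma curved_value_le_utility c :
  0 < c -> curved_value c <= utility c (curved_effort c).
Proof.
move=> c0; case/andP: k01 => k0 _.
by rewrite utility_ge_curved // addr_ge0 ?mulr_ge0 ?curved_effort_ge0 // ltW.
Qed.

Lemma best_response_uncurved c : (c <= 0 \/ curved_value c <= uncurved_value) ->
  is_best_response c a.
Proof.
case/andP: a01 => a0 a1 hc; split; first by rewrite !ltW.
move=> t' /(utility_le_values c) [le_t'u|[c0 le_t'c]].
  exact: le_trans le_t'u (uncurved_value_le_utility c).
case: hc => [|le_cu]; first by rewrite leNgt c0.
by rewrite (le_trans le_t'c) // (le_trans le_cu) // uncurved_value_le_utility.
Qed.

Lemma best_response_curved c : 0 < c -> uncurved_value <= curved_value c ->
  is_best_response c (curved_effort c).
Proof.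
move=> c0 le_uc; split; first exact: curved_effort_in01.
move=> t' /(utility_le_values c) [le_t'u|[_ le_t'c]].
  by rewrite (le_trans le_t'u) // (le_trans le_uc) // curved_value_le_utility.
by rewrite (le_trans le_t'c) // curved_value_le_utility.
Qed.

(* A maximiser of the upper envelope of two functions with unique peaks is the
   higher of the two peaks. *)
Lemma best_response_cases c t : is_best_response c t ->
  t = a /\ (c <= 0 \/ curved_value c <= uncurved_value) \/
  [/\ 0 < c, t = curved_effort c & uncurved_value <= curved_value c].
Proof.
move=> [t01 best]; case/andP: (t01) => t0 _.
have le_ua := uncurved_value_le_utility c.
have a01' : 0 <= a <= 1 by case/andP: a01 => a0 a1; rewrite !ltW.
case: (utility_cases c t0) => [Ut|[c0 Ut]].
  have ta : t = a.
    apply/eqP; apply: contraT => ta.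
    have := best a a01'; have := uncurved_lt t01 ta; rewrite -Ut; lra.
  left; split => //; case: (leP c 0) => [|c0]; [by left | right].
  have := best _ (curved_effort_in01 c0); have := curved_value_le_utility c0.
  by rewrite Ut ta /uncurved_value; lra.
have tc : t = curved_effort c.
  apply/eqP; apply: contraT => tc.
  have := best _ (curved_effort_in01 c0); have := curved_value_le_utility c0.
  have := curved_lt c0 t01 tc; rewrite -Ut; lra.
by right; split => //; have := best a a01'; rewrite Ut tc /curved_value; lra.
Qed.

Definition max_best_response c :=
  if (0 < c) && (uncurved_value < curved_value c) then curved_effort c else a.

Definition min_best_response c :=
  if (0 < c) && (uncurved_value <= curved_value c) then curved_effort c else a.

Lemma max_best_response_is_best c : is_best_response c (max_best_response c).
Proof.
rewrite /max_best_response; case: ifPn => [/andP[c0 /ltW]|].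
  exact: best_response_curved.
rewrite negb_and -!leNgt => hc.
by apply: best_response_uncurved; case/orP: hc; [left | right].
Qed.

Lemma min_best_response_is_best c : is_best_response c (min_best_response c).
Proof.
rewrite /min_best_response; case: ifPn => [/andP[]|].
  exact: best_response_curved.
rewrite negb_and -leNgt -ltNge => hc.
by apply: best_response_uncurved; case/orP: hc => [|/ltW]; [left | right].
Qed.

Lemma max_best_response_le c : max_best_response c <= a.
Proof.
by rewrite /max_best_response; case: ifP => // /andP[/ltW/curved_effort_le].
Qed.

Lemma min_best_response_le c : min_best_response c <= a.
Proof.
by rewrite /min_best_response; case: ifP => // /andP[/ltW/curved_effort_le].
Qed.

Lemma best_response_bounds c t : is_best_response c t ->
  min_best_response c <= t <= max_best_response c.
Proof.
case/best_response_cases => [[-> hc]|[c0 -> le_uc]].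
  rewrite min_best_response_le /max_best_response; case: hc => [c_le0|le_cu].
    by rewrite ltNge c_le0 /= lexx.
  by rewrite [_ < curved_value c]ltNge le_cu andbF lexx.
rewrite /min_best_response c0 le_uc lexx /max_best_response.
by case: ifP => _ /=; rewrite ?lexx //; exact/curved_effort_le/ltW.
Qed.

Lemma max_best_response_anti c c' : c <= c' ->
  max_best_response c' <= max_best_response c.
Proof.
move=> cc'; rewrite {2}/max_best_response.
case: ifP => [/andP[c0 lt_uc]|_]; last exact: max_best_response_le.
rewrite /max_best_response (lt_le_trans c0 cc').
by rewrite (lt_le_trans lt_uc (curved_value_homo c0 cc')) curved_effort_anti.
Qed.

Lemma min_best_response_anti c c' : c <= c' ->
  min_best_response c' <= min_best_response c.
Proof.
move=> cc'; rewrite {2}/min_best_response.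
case: ifP => [/andP[c0 le_uc]|_]; last exact: min_best_response_le.
rewrite /min_best_response (lt_le_trans c0 cc').
by rewrite (le_trans le_uc (curved_value_homo c0 cc')) curved_effort_anti.
Qed.
End BestResponse.

Section Tarski.
Variables (R : realType) (I : Type) (F : (I -> R) -> I -> R) (lo hi : R).
Hypothesis F_homo : forall x y, (forall i, x i <= y i) -> forall i, F x i <= F y i.
Hypothesis F_bounded : forall x i, lo <= F x i <= hi.

(* Knaster-Tarski in the complete lattice [lo, hi]^I: the greatest fixed point
   is the coordinatewise supremum of the post-fixed points. *)
Lemma greatest_fixpoint : exists z : I -> R, (forall i, F z i = z i) /\
  forall y, (forall i, y i <= F y i) -> forall i, y i <= z i.
Proof.
pose post i : set R := fun r => exists2 y, (forall j, y j <= F y j) & r = y i.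
pose z i := sup (post i).
have post_sup i : has_sup (post i).
  split.
    by exists lo, (fun=> lo) => // j; case/andP: (F_bounded (fun=> lo) j).
  exists hi => _ [y post_y ->]; apply: le_trans (post_y i) _.
  by case/andP: (F_bounded y i).
have le_z y : (forall j, y j <= F y j) -> forall i, y i <= z i.
  by move=> post_y i; apply: (sup_upper_bound (post_sup i)); exists y.
have post_z i : z i <= F z i.
  apply: ge_sup (post_sup i).1 _ => _ [y post_y ->].
  exact: le_trans (post_y i) (F_homo (le_z y post_y) i).
exists z; split=> [i|//]; apply/eqP; rewrite eq_le post_z andbT.
exact: le_z (F z) (F_homo post_z) i.
Qed.
End Tarski.

Lemma least_fixpoint (R : realType) (I : Type) (F : (I -> R) -> I -> R)
    (lo hi : R) :
  (forall x y, (forall i, x i <= y i) -> forall i, F x i <= F y i) ->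
  (forall x i, lo <= F x i <= hi) ->
  exists w : I -> R, (forall i, F w i = w i) /\
    forall y, (forall i, F y i <= y i) -> forall i, w i <= y i.
Proof.
move=> F_homo F_bounded.
pose G y i := - F (fun j => - y j) i.
have G_homo x y : (forall i, x i <= y i) -> forall i, G x i <= G y i.
  by move=> xy i; rewrite lerN2; apply: F_homo => j; rewrite lerN2.
have G_bounded x i : - hi <= G x i <= - lo.
  by rewrite lerN2 andbC lerN2; apply: F_bounded.
have [z [z_fix z_greatest]] := greatest_fixpoint G_homo G_bounded.
exists (fun i => - z i); split=> [i|y pre_y i].
  by rewrite -(z_fix i) /G opprK.
rewrite lerNl; apply: (z_greatest (fun j => - y j)) => j.
rewrite /G lerN2; apply: le_trans (pre_y j).
by apply: F_homo => j'; rewrite opprK.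
Qed.

Section CurvedExamGame.
Variables (R : realType) (n : nat) (alpha : 'I_n -> R) (m : R).
Hypotheses (n_ge2 : (2 <= n)%N) (alpha01 : forall i, 0 < alpha i < 1).

Local Notation k := (1 - n%:R^-1 : R).

Lemma n_gt0 : 0 < n%:R :> R.
Proof. by rewrite ltr0n (leq_trans _ n_ge2). Qed.

Lemma own_weight01 : 0 < k < 1.
Proof.
have n2 : 2 <= n%:R :> R by rewrite (ler_nat R 2 n).
rewrite subr_gt0 invf_lt1 ?n_gt0 ?(lt_le_trans _ n2) ?ltr1n //=.
by rewrite gtrDl oppr_lt0 invr_gt0 n_gt0.
Qed.

Definition headroom (x : profile R n) (i : 'I_n) :=
  m - (\sum_(j < n | j != i) x j) / n%:R.

Lemma payoffE x i : payoff alpha m x i = utility k (alpha i) (headroom x i) (x i).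
Proof.
rewrite /payoff /utility /cobb_douglas /grade addr_maxr addr0 maxC.
congr (powR (Num.max _ _) _ * _).
rewrite /headroom /xbar (bigD1 i) //=.
by field; rewrite gt_eqF ?n_gt0.
Qed.

Lemma payoff_deviate x i y :
  payoff alpha m (deviate x i y) i = utility k (alpha i) (headroom x i) y.
Proof.
rewrite payoffE /deviate eqxx; congr (utility _ _ (_ - _ / _) _).
by apply: eq_bigr => j /negbTE ->.
Qed.

Lemma headroom_anti x y i : (forall j, x j <= y j) -> headroom y i <= headroom x i.
Proof.
move=> xy; rewrite lerB // ler_pM2r ?invr_gt0 ?n_gt0 //.
exact: ler_sum.
Qed.

Lemma negative_spillover x i j y y' :
  in01 x -> j != i -> 0 <= y -> y <= y' -> y' <= 1 ->
  payoff alpha m (deviate x j y') i <= payoff alpha m (deviate x j y) i.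
Proof.
move=> x01 ji y0 yy' _; rewrite !payoffE /deviate eq_sym (negbTE ji).
apply: (utility_homo _ (alpha01 i)); first by case/andP: (x01 i).
by apply: headroom_anti => l; case: ifP.
Qed.

Lemma is_NE_best_response x :
  is_NE alpha m x <-> forall i, is_best_response k (alpha i) (headroom x i) (x i).
Proof.
split=> [[x01 NE] i|best]; first split=> [//|t' /(NE i)].
  by rewrite payoff_deviate payoffE.
split=> [i|i t' /((best i).2)]; first exact: (best i).1.
by rewrite payoff_deviate payoffE.
Qed.

Section Reply.
Variable br : 'I_n -> R -> R.
Hypothesis br_best : forall i c, is_best_response k (alpha i) c (br i c).
Hypothesis br_anti : forall i c c', c <= c' -> br i c' <= br i c.

Definition reply (x : profile R n) i := br i (headroom x i).

Lemma reply_homo x y : (forall i, x i <= y i) -> forall i, reply x i <= reply y i.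
Proof. by move=> xy i; apply/br_anti/headroom_anti. Qed.

Lemma reply_bounded x i : 0 <= reply x i <= 1.
Proof. exact: (br_best i _).1. Qed.

Lemma fixed_reply_is_NE x : (forall i, reply x i = x i) -> is_NE alpha m x.
Proof. by move=> fix_x; apply/is_NE_best_response => i; rewrite -fix_x. Qed.
End Reply.

Lemma greatest_NE : exists ys : profile R n, is_NE alpha m ys /\
  forall xe, is_NE alpha m xe -> forall i, xe i <= ys i.
Proof.
pose br i := max_best_response k (alpha i).
have br_best i c : is_best_response k (alpha i) c (br i c).
  exact: max_best_response_is_best own_weight01 (alpha01 i) c.
have br_anti i c c' : c <= c' -> br i c' <= br i c.
  exact: max_best_response_anti own_weight01 (alpha01 i) c c'.
have [ys [ys_fix ys_greatest]] :=
  greatest_fixpoint (reply_homo br_anti) (reply_bounded br_best).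
exists ys; split; first exact: fixed_reply_is_NE ys_fix.
move=> xe /is_NE_best_response best_xe; apply: ys_greatest => i.
by case/andP: (best_response_bounds own_weight01 (alpha01 i) (best_xe i)).
Qed.

Lemma least_NE : exists xs : profile R n, is_NE alpha m xs /\
  forall xe, is_NE alpha m xe -> forall i, xs i <= xe i.
Proof.
pose br i := min_best_response k (alpha i).
have br_best i c : is_best_response k (alpha i) c (br i c).
  exact: min_best_response_is_best own_weight01 (alpha01 i) c.
have br_anti i c c' : c <= c' -> br i c' <= br i c.
  exact: min_best_response_anti own_weight01 (alpha01 i) c c'.
have [xs [xs_fix xs_least]] :=
  least_fixpoint (reply_homo br_anti) (reply_bounded br_best).
exists xs; split; first exact: fixed_reply_is_NE xs_fix.
move=> xe /is_NE_best_response best_xe; apply: xs_least => i.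
by case/andP: (best_response_bounds own_weight01 (alpha01 i) (best_xe i)).
Qed.
End CurvedExamGame.

Theorem mainTheorem2 (R : realType) (n : nat) (hn : (2 <= n)%N)
    (alpha : 'I_n -> R) (m : R)
    (halpha : forall i, 0 < alpha i < 1) (hm : 0 < m < 1) :
  (* negative spillovers: U_i non-increasing in each opponent's effort x_j *)
  (forall (x : profile R n) (i j : 'I_n) (y y' : R),
      in01 x -> j != i -> 0 <= y -> y <= y' -> y' <= 1 ->
      payoff alpha m (deviate x j y') i <= payoff alpha m (deviate x j y) i)
  /\ (exists x : profile R n, is_NE alpha m x)
  /\ (exists xs ys : profile R n,
        is_NE alpha m xs /\ is_NE alpha m ys /\
        forall xe : profile R n, is_NE alpha m xe ->
          forall i, xs i <= xe i <= ys i).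
Proof.
have [ys [ys_NE ys_greatest]] := greatest_NE m hn halpha.
have [xs [xs_NE xs_least]] := least_NE m hn halpha.
split; first exact: negative_spillover hn halpha.
split; first by exists ys.
exists xs, ys; do 2!split=> //.
by move=> xe xe_NE i; rewrite xs_least ?ys_greatest.
Qed.
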